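(* Let $(G,k)$ be an instance of \textsc{Bicolored $P_3$ Deletion} and let $e_1,e_2,e_3$ be three distinct edges of $G$ such that $e_1$ forms a bicolored $P_3$ with $e_2$ and $e_1$ forms a bicolored $P_3$ with $e_3$. Then $(G,k)$ is a yes-instance if and only if $(G-e_1,k-1)$ is a yes-instance or $(G-\{e_2,e_3\},k-2)$ is a yes-instance.
   Context: A two-colored graph $G=(V,E_r,E_b)$ is a finite simple undirected graph whose edge set $E=E_r\uplus E_b$ is partitioned into red and blue edges. A bicolored $P_3$ is an induced subgraph on three vertices $u,v,w$ with edges $\{u,v\},\{v,w\}$ of different colors and $\{u,w\}\notin E$; these two edges are said to form a bicolored $P_3$. \textsc{Bicolored $P_3$ Deletion}: given $G$ and an integer $k$, decide whether some $S\subseteq E$ with $|S|\le k$ makes $G-S$ free of induced bicolored $P_3$s (no-instance if $k<0$). *)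

From mathcomp Require Import all_boot all_order all_algebra.
Set Implicit Arguments. Unset Strict Implicit. Unset Printing Implicit Defensive.
Import GRing.Theory Num.Theory.

Definition two_colored (T : finType) (Er Eb : {set {set T}}) : Prop :=
  (forall e, e \in Er :|: Eb -> #|e| = 2) /\ [disjoint Er & Eb].

Definition edges (T : finType) (Er Eb : {set {set T}}) := Er :|: Eb.

Definition forms_bP3 (T : finType) (Er Eb : {set {set T}}) (e f : {set T}) : Prop :=
  exists u v w : T,
    [/\ [&& u != v, v != w & u != w],
        e = [set u; v], f = [set v; w]
      & ((e \in Er /\ f \in Eb) \/ (e \in Eb /\ f \in Er)) /\
          [set u; w] \notin edges Er Eb].

Definition bP3_free (T : finType) (Er Eb : {set {set T}}) : Prop :=
  forall e f, ~ forms_bP3 Er Eb e f.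


Definition yes_instance (T : finType) (Er Eb : {set {set T}}) (k : int) : Prop :=
  (0 <= k)%R /\
  exists S : {set {set T}}, [/\ S \subset edges Er Eb, (#|S|%:Z <= k)%R
                               & bP3_free (Er :\: S) (Eb :\: S)].

(* If the two edges of a bicolored P3 both survive the deletion of S, the P3
   survives too; so every solution contains e1, or else contains both e2 and
   e3.  Conversely, a solution of an instance obtained by deleting a set A of
   edges, extended by A, solves the original instance with budget #|A| more. *)
From mathcomp Require Import all_boot all_order all_algebra.
From mathcomp Require Import zify.
Set Implicit Arguments. Unset Strict Implicit.

Section Deletion.

Variable T : finType.
Implicit Types (Er Eb S A : {set {set T}}) (e f : {set T}) (k : int).

Definition bP3_deletion_set Er Eb k S :=
  [/\ S \subset edges Er Eb, (#|S|%:Z <= k)%R & bP3_free (Er :\: S) (Eb :\: S)].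

Lemma yes_instanceP Er Eb k :
  yes_instance Er Eb k <-> exists S, bP3_deletion_set Er Eb k S.
Proof.
split=> [[_ [S HS]]|[S [SE Sk Sf]]]; first by exists S.
by split; [lia | exists S].
Qed.

Lemma edges_setD Er Eb A : edges (Er :\: A) (Eb :\: A) = edges Er Eb :\: A.
Proof. by rewrite /edges setDUl. Qed.

Lemma forms_bP3_setD Er Eb S e f :
  forms_bP3 Er Eb e f -> e \notin S -> f \notin S ->
  forms_bP3 (Er :\: S) (Eb :\: S) e f.
Proof.
move=> [u [v [w [uvw -> -> [col uw]]]]] eS fS; exists u, v, w; split=> //; split.
  by rewrite !inE eS fS; case: col => [[-> ->]|[-> ->]]; [left | right].
by rewrite edges_setD inE negb_and uw orbT.
Qed.

Lemma bP3_deletion_set_hit Er Eb k S e f :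
  bP3_deletion_set Er Eb k S -> forms_bP3 Er Eb e f -> (e \in S) || (f \in S).
Proof.
move=> [_ _ Sfree] ef; apply: contraT => /norP[eS fS].
by case: (Sfree _ _ (forms_bP3_setD ef eS fS)).
Qed.

Lemma bP3_deletion_setD Er Eb k S A :
  A \subset S -> bP3_deletion_set Er Eb k S ->
  bP3_deletion_set (Er :\: A) (Eb :\: A) (k - #|A|%:Z) (S :\: A).
Proof.
move=> AS [SE Sk Sfree]; split.
- by rewrite edges_setD setSD.
- have := cardsD S A; rewrite (setIidPr AS).
  have := subset_leq_card AS; lia.
- have AUS : A :|: S :\: A = S by rewrite -{1}(setIidPr AS) setID.
  by rewrite !setDDl AUS.
Qed.

Lemma bP3_deletion_setU Er Eb k S A :
  A \subset edges Er Eb ->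
  bP3_deletion_set (Er :\: A) (Eb :\: A) (k - #|A|%:Z) S ->
  bP3_deletion_set Er Eb k (A :|: S).
Proof.
move=> AE [SE Sk Sfree]; split.
- by rewrite subUset AE (subset_trans SE) // edges_setD subsetDl.
- have := cardsU A S; lia.
- by rewrite -!setDDl.
Qed.

End Deletion.

Theorem lemma5 (T : finType) (Er Eb : {set {set T}}) (k : int)
  (e1 e2 e3 : {set T}) :
  two_colored Er Eb ->
  e1 \in edges Er Eb -> e2 \in edges Er Eb -> e3 \in edges Er Eb ->
  e1 != e2 -> e1 != e3 -> e2 != e3 ->
  forms_bP3 Er Eb e1 e2 -> forms_bP3 Er Eb e1 e3 ->
  (yes_instance Er Eb k <->
     yes_instance (Er :\ e1) (Eb :\ e1) (k - 1)%R \/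
     yes_instance (Er :\: [set e2; e3]) (Eb :\: [set e2; e3]) (k - 2)%R).
Proof.
(* Only e2 != e3 matters: it makes the second branch cost exactly 2. *)
move=> _ E1 E2 E3 _ _ n23 P12 P13.
have card23 : #|[set e2; e3]| = 2 by rewrite cards2 n23.
rewrite !yes_instanceP; split=> [[S HS] | [[S HS] | [S HS]]].
- case e1S: (e1 \in S).
    left; exists (S :\ e1).
    by have := bP3_deletion_setD (A := [set e1]) _ HS; rewrite sub1set cards1; apply.
  have e2S : e2 \in S by have := bP3_deletion_set_hit HS P12; rewrite e1S.
  have e3S : e3 \in S by have := bP3_deletion_set_hit HS P13; rewrite e1S.
  right; exists (S :\: [set e2; e3]).
  have := bP3_deletion_setD (A := [set e2; e3]) _ HS.
  by rewrite subUset !sub1set e2S e3S card23; apply.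
- exists ([set e1] :|: S); apply: bP3_deletion_setU; first by rewrite sub1set.
  by rewrite cards1.
- exists ([set e2; e3] :|: S); apply: bP3_deletion_setU.
    by rewrite subUset !sub1set E2 E3.
  by rewrite card23.
Qed.
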